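(* Let $n\ge 2$ be an integer, let $A$ be a $C^*$-algebra, and let $0<r<\frac{1}{2}$, $\theta\in[0,\infty)$ be real numbers. Suppose $f:A\to A$ satisfies $$\Big\|\mu f\Big(\frac{x+y}{2}\Big)+\mu f\Big(\frac{x-y}{2}\Big)-f(\mu x)+f(a^n)-\big(f(a)a^{n-1}+af(a)a^{n-2}+\cdots+a^{n-2}f(a)a+a^{n-1}f(a)\big)+f(w^* )-(f(w))^*\Big\|\le \theta(\|x\|^r\|y\|^r+\|a\|^{2r}+\|w\|^r)$$ for all $\mu\in\mathbb{T}$ and all $x,y,a,w\in A$. Then there exists a unique $*$-$n$-Jordan derivation $D:A\to A$ such that $$\|f(x)-D(x)\|\le \frac{3^r\theta}{2-2^r}\|x\|^{2r}$$ for all $x\in A$.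
   Context: $\mathbb{T}=\{\mu\in\mathbb{C}:|\mu|=1\}$. For an integer $n\ge 2$, an $n$-Jordan derivation on an algebra $A$ is a linear map $D:A\to A$ such that $D(a^n)=D(a)a^{n-1}+aD(a)a^{n-2}+\cdots+a^{n-2}D(a)a+a^{n-1}D(a)$ for all $a\in A$. On a $C^*$-algebra, a $*$-$n$-Jordan derivation is an $n$-Jordan derivation $D$ with $D(a^* )=(D(a))^*$ for all $a\in A$. *)

From Stdlib Require Import Reals.
From Coquelicot Require Export Coquelicot.
Export Complex.
Open Scope R_scope.

Section CStar.
Variable A : CompleteNormedModule C_AbsRing.

Record cstar_algebra (mul : A -> A -> A) (star : A -> A) : Prop := {
  cs_mul_assoc : forall x y z, mul x (mul y z) = mul (mul x y) z;
  cs_mul_plus_l : forall x y z, mul x (plus y z) = plus (mul x y) (mul x z);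
  cs_mul_plus_r : forall x y z, mul (plus x y) z = plus (mul x z) (mul y z);
  cs_mul_scal_l : forall (c : C) x y, mul (scal c x) y = scal c (mul x y);
  cs_mul_scal_r : forall (c : C) x y, mul x (scal c y) = scal c (mul x y);
  cs_norm_mul : forall x y, norm (mul x y) <= norm x * norm y;
  cs_star_invol : forall x, star (star x) = x;
  cs_star_plus : forall x y, star (plus x y) = plus (star x) (star y);
  cs_star_scal : forall (c : C) x, star (scal c x) = scal (Cconj c) (star x);
  cs_star_mul : forall x y, star (mul x y) = mul (star y) (star x);
  cs_cstar : forall x, norm (mul (star x) x) = norm x * norm x
}.

Fixpoint lmulk (mul : A -> A -> A) (a : A) (k : nat) (x : A) : A :=
  match k with O => x | S k' => mul a (lmulk mul a k' x) end.
Fixpoint rmulk (mul : A -> A -> A) (a : A) (k : nat) (x : A) : A :=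
  match k with O => x | S k' => mul (rmulk mul a k' x) a end.

(* a^n for n >= 1 *)
Definition apow (mul : A -> A -> A) (a : A) (n : nat) : A := lmulk mul a (n - 1) a.

Fixpoint sumA (f : nat -> A) (m : nat) : A :=
  match m with O => zero | S m' => plus (sumA f m') (f m') end.

(* D(a) a^{n-1} + a D(a) a^{n-2} + ... + a^{n-1} D(a) *)
Definition jordan_sum (mul : A -> A -> A) (n : nat) (d a : A) : A :=
  sumA (fun k => lmulk mul a k (rmulk mul a (n - 1 - k) d)) n.

Definition n_jordan_derivation (mul : A -> A -> A) (n : nat) (D : A -> A) : Prop :=
  (forall x y, D (plus x y) = plus (D x) (D y)) /\
  (forall (c : C) x, D (scal c x) = scal c (D x)) /\
  (forall a, D (apow mul a n) = jordan_sum mul n (D a) a).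

Definition star_n_jordan_derivation (mul : A -> A -> A) (star : A -> A) (n : nat)
    (D : A -> A) : Prop :=
  n_jordan_derivation mul n D /\ (forall a, D (star a) = star (D a)).
End CStar.

(* x^r for x >= 0, r > 0, with the convention 0^r = 0 *)
Definition rpow (x r : R) : R := if Req_EM_T x 0 then 0 else Rpower x r.

(* Setting all but one of x, y, a, w to 0 (where [rpow] vanishes) splits the hypothesis into
   three separate estimates, and with y = 0 the first one becomes the exact identity
   f(mu x) = 2 mu f(x/2).  Hence f commutes with unimodular scalars and with the dilations 2^k.
   Each remaining defect (Cauchy, Jordan, involution) scales by at least 2^k under x -> 2^k x,
   while its bound scales only by 2^(2rk) or 2^(rk) with 2r < 1; so every defect vanishes and
   f itself is a *-n-Jordan derivation.  Thus D = f, and the same dilation argument applied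
   to f - D' gives uniqueness. *)

From Stdlib Require Import Reals Lra Lia ssreflect.
From Coquelicot Require Import Coquelicot.
Import Complex.
Open Scope R_scope.

Lemma eq0_of_dilation_bound (z K p : R) :
  0 <= z -> p < 1 -> (forall k : nat, 2 ^ k * z <= K * Rpower (2 ^ k) p) -> z = 0.
Proof.
  move=> Hz Hp Hbound.
  case: (Req_dec z 0) => [// | Hz0]; exfalso.
  (* [2^k = (2^k)^(1-p) (2^k)^p] and [(2^k)^(1-p) >= 1 + (1-p) k ln 2] grows without bound. *)
  have Hgrowth k : (1 - p) * INR k * ln 2 * z <= K.
  { have H2k : 0 < 2 ^ k by apply: pow_lt; lra.
    have Hsplit : 2 ^ k = Rpower (2 ^ k) (1 - p) * Rpower (2 ^ k) p.
      by rewrite -Rpower_plus Rplus_comm Rplus_minus Rpower_1.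
    have Hexp : (1 - p) * INR k * ln 2 <= Rpower (2 ^ k) (1 - p).
    { rewrite /Rpower ln_pow; last by lra.
      case: (Req_dec ((1 - p) * (INR k * ln 2)) 0) => E.
      - rewrite E exp_0 Rmult_assoc E. lra.
      - have := exp_ineq1 _ E. rewrite Rmult_assoc. lra. }
    have Hpos : 0 < Rpower (2 ^ k) p by apply: exp_pos.
    have Hk : Rpower (2 ^ k) (1 - p) * z <= K.
    { apply: (Rmult_le_reg_r (Rpower (2 ^ k) p)) => //.
      have := Hbound k. rewrite {1}Hsplit. lra. }
    nra. }
  have Hln : 0 < ln 2 by have := ln_lt_2; lra.
  have Hc : 0 < (1 - p) * ln 2 * z by apply: Rmult_lt_0_compat; nra.
  have [k Hk] := INR_unbounded (K / ((1 - p) * ln 2 * z)).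
  have := Hgrowth k.
  have -> : K = K / ((1 - p) * ln 2 * z) * ((1 - p) * ln 2 * z) by field; lra.
  nra.
Qed.

Lemma pow2_unbounded (T : R) : exists k : nat, T <= 2 ^ k.
Proof.
  have [k Hk] := INR_unbounded T. exists k.
  suff : INR k <= 2 ^ k by lra.
  elim: k {Hk} => [|k IH]; first by rewrite /=; lra.
  rewrite S_INR -tech_pow_Rmult. have := pow_R1_Rle 2 k. lra.
Qed.

Lemma rpow_ge0 (x p : R) : 0 <= rpow x p.
Proof. rewrite /rpow. case: (Req_EM_T x 0) => _; [lra | exact: Rlt_le (exp_pos _)]. Qed.

Lemma rpow_0 (p : R) : rpow 0 p = 0.
Proof. rewrite /rpow. by case: (Req_EM_T 0 0). Qed.

Lemma rpow_mult (t x p : R) : 0 < t -> 0 <= x -> rpow (t * x) p = Rpower t p * rpow x p.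
Proof.
  move=> Ht Hx. rewrite /rpow.
  case: (Req_EM_T x 0) => [->|Hx0].
  - rewrite Rmult_0_r. case: (Req_EM_T 0 0) => [_|//]. ring.
  - case: (Req_EM_T (t * x) 0) => [/Rmult_integral [] | _]; try lra.
    rewrite Rpower_mult_distr //; lra.
Qed.

Section ComplexNormedModule.
Variable V : NormedModule C_AbsRing.

Lemma scal_RtoC_mult (a b : R) (x : V) :
  scal (RtoC a) (scal (RtoC b) x) = scal (RtoC (a * b)) x.
Proof. by rewrite scal_assoc RtoC_mult. Qed.

Lemma scal_RtoC_comm (a b : R) (x : V) :
  scal (RtoC a) (scal (RtoC b) x) = scal (RtoC b) (scal (RtoC a) x).
Proof. by rewrite !scal_RtoC_mult Rmult_comm. Qed.

Lemma scal_RtoC_inv_l (t : R) (x : V) : t <> 0 -> scal (RtoC (/ t)) (scal (RtoC t) x) = x.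
Proof. move=> Ht. by rewrite scal_RtoC_mult Rinv_l // scal_one. Qed.

Lemma scal_RtoC_inv_r (t : R) (x : V) : t <> 0 -> scal (RtoC t) (scal (RtoC (/ t)) x) = x.
Proof. move=> Ht. by rewrite scal_RtoC_mult Rinv_r // scal_one. Qed.

Lemma plus_diag (x : V) : plus x x = scal (RtoC 2) x.
Proof.
  have -> : RtoC 2 = plus one one by rewrite /plus /one /= /Cplus /RtoC /=; f_equal; ring.
  by rewrite scal_distr_r scal_one.
Qed.

Lemma plus_sum_diff (u v : V) : plus (plus u v) (minus u v) = scal (RtoC 2) u.
Proof.
  by rewrite -plus_diag /minus (plus_comm u (opp v)) plus_assoc -(plus_assoc u v)
    plus_opp_r plus_zero_r.
Qed.

Lemma minus_sum_diff (u v : V) : minus (plus u v) (minus u v) = scal (RtoC 2) v.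
Proof.
  by rewrite -plus_diag /minus opp_plus opp_opp (plus_comm (opp u) v) plus_assoc
    -(plus_assoc u v v) (plus_comm u (plus v v)) -(plus_assoc (plus v v) u) plus_opp_r plus_zero_r.
Qed.

Lemma scal_eq_zero (a b : C) (x : V) : scal a x = scal b x -> a <> b -> x = zero.
Proof.
  move=> E Hab.
  have Hd : Cminus a b <> RtoC 0.
  { move=> Hd. apply: Hab. rewrite -(Cplus_0_l b) -Hd /Cminus. ring. }
  have Hdiff : scal (Cminus a b) x = zero.
    by rewrite /Cminus (scal_distr_r a) E -scal_distr_r plus_opp_r scal_zero_l.
  have -> : x = scal (Cmult (/ Cminus a b) (Cminus a b)) x by rewrite Cinv_l // scal_one.
  by rewrite -scal_assoc Hdiff scal_zero_r.
Qed.

Lemma norm_scal_RtoC (t : R) (x : V) : 0 <= t -> norm (scal (RtoC t) x) = t * norm x.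
Proof.
  move=> Ht. case: (Req_dec t 0) => [->|Ht0].
  { have -> : RtoC 0 = zero by []. rewrite scal_zero_l norm_zero. ring. }
  have Habs s : 0 <= s -> abs (K := C_AbsRing) (RtoC s) = s.
  { move=> Hs. rewrite /abs /= Cmod_R. exact: Rabs_pos_eq. }
  apply: Rle_antisym.
  - rewrite -{2}(Habs t Ht). exact: norm_scal.
  - have Hinv : 0 <= / t by apply: Rlt_le; apply: Rinv_0_lt_compat; lra.
    have := norm_scal (RtoC (/ t)) (scal (RtoC t) x).
    rewrite scal_RtoC_inv_l // Habs // => H.
    have := Rmult_le_compat_l t _ _ Ht H.
    by rewrite -Rmult_assoc Rinv_r // Rmult_1_l.
Qed.

Lemma rpow_norm_scal (t p : R) (x : V) :
  0 < t -> rpow (norm (scal (RtoC t) x)) p = Rpower t p * rpow (norm x) p.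
Proof. move=> Ht. rewrite norm_scal_RtoC; last lra. apply: rpow_mult => //. exact: norm_ge_0. Qed.

Lemma rpow_norm_zero (p : R) : rpow (norm (zero : V)) p = 0.
Proof. by rewrite norm_zero rpow_0. Qed.

Lemma eq_zero_of_norm_le0 (x : V) : norm x <= 0 -> x = zero.
Proof. move=> H. exact: norm_eq_zero (Rle_antisym _ _ H (norm_ge_0 _)). Qed.

Lemma eq_of_norm_minus_le0 (x y : V) : norm (minus x y) <= 0 -> x = y.
Proof.
  move=> /eq_zero_of_norm_le0 H. apply: (plus_reg_r (opp y)).
  by rewrite plus_opp_r.
Qed.

Lemma eq_of_dilation_bound (x y : V) (K p : R) : p < 1 ->
  (forall k : nat, 2 ^ k * norm (minus x y) <= K * Rpower (2 ^ k) p) -> x = y.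
Proof.
  move=> Hp Hbound. apply: eq_of_norm_minus_le0. apply: Req_le.
  exact: eq0_of_dilation_bound (norm_ge_0 _) Hp Hbound.
Qed.

End ComplexNormedModule.

Lemma homogeneous_eq_of_dist_le (V W : NormedModule C_AbsRing) (g h : V -> W) (K p : R) :
  p < 1 ->
  (forall (t : R) x, g (scal (RtoC t) x) = scal (RtoC t) (g x)) ->
  (forall (t : R) x, h (scal (RtoC t) x) = scal (RtoC t) (h x)) ->
  (forall x, norm (minus (g x) (h x)) <= K * rpow (norm x) p) ->
  forall x, g x = h x.
Proof.
  move=> Hp Hg Hh Hdist x.
  apply: (eq_of_dilation_bound _ _ _ (K * rpow (norm x) p) p Hp) => k.
  have H2k : 0 < 2 ^ k by apply: pow_lt; lra.
  have := Hdist (scal (RtoC (2 ^ k)) x).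
  rewrite Hg Hh -scal_minus_distr_l rpow_norm_scal // norm_scal_RtoC; last lra.
  move=> H. apply: (Rle_trans _ _ _ H). right. ring.
Qed.

Section BilinearProducts.
Variables (A : CompleteNormedModule C_AbsRing) (mul : A -> A -> A).
Hypothesis mul_scal_l : forall (c : C) x y, mul (scal c x) y = scal c (mul x y).
Hypothesis mul_scal_r : forall (c : C) x y, mul x (scal c y) = scal c (mul x y).

Lemma lmulk_scal (c : C) (a y : A) (k : nat) :
  lmulk A mul a k (scal c y) = scal c (lmulk A mul a k y).
Proof. elim: k => [|k IH] //=. by rewrite IH mul_scal_r. Qed.

Lemma rmulk_scal (c : C) (a y : A) (k : nat) :
  rmulk A mul a k (scal c y) = scal c (rmulk A mul a k y).
Proof. elim: k => [|k IH] //=. by rewrite IH mul_scal_l. Qed.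

Lemma lmulk_scal_base (t : R) (a y : A) (k : nat) :
  lmulk A mul (scal (RtoC t) a) k y = scal (RtoC (t ^ k)) (lmulk A mul a k y).
Proof.
  elim: k => [|k IH] /=; first by rewrite scal_one.
  by rewrite IH mul_scal_l mul_scal_r scal_RtoC_mult.
Qed.

Lemma rmulk_scal_base (t : R) (a y : A) (k : nat) :
  rmulk A mul (scal (RtoC t) a) k y = scal (RtoC (t ^ k)) (rmulk A mul a k y).
Proof.
  elim: k => [|k IH] /=; first by rewrite scal_one.
  by rewrite IH mul_scal_l mul_scal_r scal_RtoC_mult Rmult_comm.
Qed.

Lemma apow_scal (t : R) (a : A) (n : nat) : (1 <= n)%nat ->
  apow A mul (scal (RtoC t) a) n = scal (RtoC (t ^ n)) (apow A mul a n).
Proof.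
  move=> Hn. rewrite /apow lmulk_scal_base lmulk_scal scal_RtoC_mult.
  rewrite Rmult_comm tech_pow_Rmult. do 3 f_equal. lia.
Qed.

Lemma apow_zero (n : nat) : apow A mul zero n = zero.
Proof. by rewrite /apow -{2}(scal_zero_l (zero : A)) lmulk_scal scal_zero_l. Qed.

Lemma sumA_ext (g h : nat -> A) (m : nat) :
  (forall k, (k < m)%nat -> g k = h k) -> sumA A g m = sumA A h m.
Proof.
  elim: m => [|m IH] Hgh //=.
  rewrite IH; last by move=> k Hk; apply: Hgh; lia.
  by rewrite Hgh.
Qed.

Lemma sumA_scal (c : C) (g : nat -> A) (m : nat) :
  sumA A (fun k => scal c (g k)) m = scal c (sumA A g m).
Proof. elim: m => [|m IH] /=; first by rewrite scal_zero_r. by rewrite IH scal_distr_l. Qed.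

Lemma jordan_sum_scal (c : C) (n : nat) (d a : A) :
  jordan_sum A mul n (scal c d) a = scal c (jordan_sum A mul n d a).
Proof.
  rewrite /jordan_sum -sumA_scal. apply: sumA_ext => k _.
  by rewrite rmulk_scal lmulk_scal.
Qed.

Lemma jordan_sum_zero (n : nat) (a : A) : jordan_sum A mul n zero a = zero.
Proof. by rewrite -{1}(scal_zero_l (zero : A)) jordan_sum_scal scal_zero_l. Qed.

Lemma jordan_sum_scal_both (t : R) (n : nat) (d a : A) :
  jordan_sum A mul n (scal (RtoC t) d) (scal (RtoC t) a)
  = scal (RtoC (t ^ n)) (jordan_sum A mul n d a).
Proof.
  rewrite /jordan_sum -sumA_scal. apply: sumA_ext => k Hk.
  rewrite rmulk_scal_base rmulk_scal lmulk_scal_base !lmulk_scal !scal_RtoC_mult.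
  rewrite -pow_add Rmult_comm tech_pow_Rmult. do 3 f_equal. lia.
Qed.

End BilinearProducts.

Section ConjugateLinearMap.
Variables (A : CompleteNormedModule C_AbsRing) (star : A -> A).
Hypothesis star_scal : forall (c : C) x, star (scal c x) = scal (Cconj c) (star x).

Lemma star_scal_RtoC (t : R) (x : A) : star (scal (RtoC t) x) = scal (RtoC t) (star x).
Proof.
  rewrite star_scal. congr scal. rewrite /Cconj /RtoC /=. congr pair. ring.
Qed.

Lemma star_zero : star zero = zero.
Proof. by rewrite -{1}(scal_zero_r (V := A) (RtoC 0)) star_scal_RtoC scal_zero_l. Qed.

End ConjugateLinearMap.

Lemma Cmod_RtoC_1 : Cmod (RtoC 1) = 1.
Proof. by rewrite Cmod_R Rabs_R1. Qed.

Section ApproximateJordanDerivation.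
Variables (n : nat) (A : CompleteNormedModule C_AbsRing) (mul : A -> A -> A) (star : A -> A).
Variables (r theta : R) (f : A -> A).
Hypothesis cs : cstar_algebra A mul star.
Hypothesis n_pos : (1 <= n)%nat.
Hypothesis r_lt_half : r < / 2.
Hypothesis f_approx : forall (mu : C) (x y a w : A), Cmod mu = 1 ->
  norm (plus (plus
    (minus (plus (scal mu (f (scal (RtoC (/2)) (plus x y))))
                 (scal mu (f (scal (RtoC (/2)) (minus x y)))))
           (f (scal mu x)))
    (minus (f (apow A mul a n)) (jordan_sum A mul n (f a) a)))
    (minus (f (star w)) (star (f w))))
  <= theta * (rpow (norm x) r * rpow (norm y) r + rpow (norm a) (2 * r)
              + rpow (norm w) r).

Let mul_scal_l := cs_mul_scal_l A mul star cs.
Let mul_scal_r := cs_mul_scal_r A mul star cs.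
Let star_scal := cs_star_scal A mul star cs.

(* The summands of the hypothesis that do not involve [mu] are unknown at this point;
   comparing [mu = 1] with [mu = -1] cancels them and leaves [2 f 0 = -2 f 0]. *)
Lemma f_zero : f zero = zero.
Proof.
  set P := plus (minus (f (apow A mul zero n)) (jordan_sum A mul n (f zero) zero))
                (minus (f (star zero)) (star (f zero))).
  have Hvanish (mu : C) : Cmod mu = 1 ->
    plus (minus (plus (scal mu (f zero)) (scal mu (f zero))) (f zero)) P = zero.
  { move=> Hmu. apply: eq_zero_of_norm_le0.
    have := f_approx mu zero zero zero zero Hmu.
    rewrite plus_zero_r minus_eq_zero !scal_zero_r !rpow_norm_zero -plus_assoc => H.
    apply: (Rle_trans _ _ _ H). right. ring. }
  have Hm1 : Cmod (RtoC (-1)) = 1 by rewrite Cmod_R Rabs_left; lra.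
  have E := eq_trans (Hvanish _ Cmod_RtoC_1) (eq_sym (Hvanish _ Hm1)).
  move/plus_reg_r: E => /plus_reg_r E.
  rewrite -!scal_distr_r in E.
  apply: (scal_eq_zero _ _ _ _ E) => /= H.
  injection H. lra.
Qed.

Ltac simplify_zeros H :=
  repeat progress rewrite ?plus_zero_r ?plus_zero_l ?minus_eq_zero ?minus_zero_r ?scal_zero_r
    ?f_zero ?(apow_zero A mul mul_scal_r) ?(jordan_sum_zero A mul mul_scal_l mul_scal_r)
    ?(star_zero A star star_scal) ?rpow_norm_zero in H.

Lemma cauchy_defect_le (mu : C) (x y : A) : Cmod mu = 1 ->
  norm (minus (plus (scal mu (f (scal (RtoC (/2)) (plus x y))))
                    (scal mu (f (scal (RtoC (/2)) (minus x y)))))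
              (f (scal mu x)))
  <= theta * (rpow (norm x) r * rpow (norm y) r).
Proof.
  move=> Hmu. have H := f_approx mu x y zero zero Hmu. simplify_zeros H.
  apply: (Rle_trans _ _ _ H). right. ring.
Qed.

Lemma jordan_defect_le (a : A) :
  norm (minus (f (apow A mul a n)) (jordan_sum A mul n (f a) a)) <= theta * rpow (norm a) (2 * r).
Proof.
  have H := f_approx _ zero zero a zero Cmod_RtoC_1. simplify_zeros H.
  apply: (Rle_trans _ _ _ H). right. ring.
Qed.

Lemma star_defect_le (w : A) :
  norm (minus (f (star w)) (star (f w))) <= theta * rpow (norm w) r.
Proof.
  have H := f_approx _ zero zero zero w Cmod_RtoC_1. simplify_zeros H.
  apply: (Rle_trans _ _ _ H). right. ring.
Qed.

Lemma f_scal_unit_half (mu : C) (x : A) : Cmod mu = 1 ->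
  f (scal mu x) = plus (scal mu (f (scal (RtoC (/2)) x))) (scal mu (f (scal (RtoC (/2)) x))).
Proof.
  move=> Hmu. symmetry. apply: eq_of_norm_minus_le0.
  have H := cauchy_defect_le mu x zero Hmu. simplify_zeros H.
  by rewrite !Rmult_0_r in H.
Qed.

Lemma f_double (x : A) : f (scal (RtoC 2) x) = plus (f x) (f x).
Proof.
  rewrite -{1}(scal_one (scal (RtoC 2) x)) (f_scal_unit_half _ _ Cmod_RtoC_1).
  rewrite scal_RtoC_inv_l; last lra. by rewrite !scal_one.
Qed.

Lemma f_scal_unit (mu : C) (x : A) : Cmod mu = 1 -> f (scal mu x) = scal mu (f x).
Proof.
  move=> Hmu. rewrite (f_scal_unit_half mu x Hmu) -scal_distr_l -f_double.
  by rewrite scal_RtoC_inv_r; last lra.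
Qed.

Lemma f_scal_pow2 (k : nat) (x : A) : f (scal (RtoC (2 ^ k)) x) = scal (RtoC (2 ^ k)) (f x).
Proof.
  elim: k => [|k IH] /=; first by rewrite !scal_one.
  by rewrite -!scal_RtoC_mult f_double IH plus_diag.
Qed.

Lemma f_cauchy (x y : A) :
  plus (f (scal (RtoC (/2)) (plus x y))) (f (scal (RtoC (/2)) (minus x y))) = f x.
Proof.
  apply: (eq_of_dilation_bound _ _ _ (theta * (rpow (norm x) r * rpow (norm y) r)) (2 * r));
    first lra.
  move=> k. have H2k : 0 < 2 ^ k by apply: pow_lt; lra.
  have := cauchy_defect_le _ (scal (RtoC (2 ^ k)) x) (scal (RtoC (2 ^ k)) y) Cmod_RtoC_1.
  rewrite !scal_one -scal_distr_l -scal_minus_distr_l !(scal_RtoC_comm _ (/2) (2 ^ k))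
    !f_scal_pow2 -scal_distr_l -scal_minus_distr_l !rpow_norm_scal // norm_scal_RtoC; last lra.
  rewrite (_ : 2 * r = r + r); last ring. rewrite Rpower_plus => H.
  apply: (Rle_trans _ _ _ H). right. ring.
Qed.

Lemma f_additive (u v : A) : f (plus u v) = plus (f u) (f v).
Proof.
  have := f_cauchy (plus u v) (minus u v).
  by rewrite plus_sum_diff minus_sum_diff !scal_RtoC_inv_l //; lra.
Qed.

(* Every real [s] with [|s| <= 2] is [mu + conj mu] for a unimodular [mu]. *)
Lemma f_scal_real_small (s : R) (x : A) : -2 <= s <= 2 ->
  f (scal (RtoC s) x) = scal (RtoC s) (f x).
Proof.
  move=> Hs. set mu : C := (s / 2, sqrt (1 - (s / 2) ^ 2)).
  have Hmu : Cmod mu = 1.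
  { rewrite /Cmod /mu /= !Rmult_1_r sqrt_sqrt; last nra.
    rewrite (_ : _ + _ = 1) ?sqrt_1 //. ring. }
  have Hconj : Cmod (Cconj mu) = 1 by rewrite Cmod_conj.
  have -> : RtoC s = Cplus mu (Cconj mu) by rewrite /mu /Cplus /Cconj /RtoC /=; f_equal; field.
  by rewrite !scal_distr_r f_additive (f_scal_unit _ _ Hmu) (f_scal_unit _ _ Hconj).
Qed.

Lemma f_scal_real (t : R) (x : A) : f (scal (RtoC t) x) = scal (RtoC t) (f x).
Proof.
  have [k Hk] := pow2_unbounded (Rabs t / 2).
  have H2k : 0 < 2 ^ k by apply: pow_lt; lra.
  have Hsmall : -2 <= t / 2 ^ k <= 2.
  { have Hinv : / 2 ^ k * 2 ^ k = 1 by apply: Rinv_l; lra.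
    have := Rle_abs t. have := Rle_abs (- t). rewrite Rabs_Ropp.
    split; apply: (Rmult_le_reg_r (2 ^ k)) => //; rewrite /Rdiv Rmult_assoc Hinv; lra. }
  have -> : RtoC t = RtoC (2 ^ k * (t / 2 ^ k)) by congr RtoC; field; lra.
  by rewrite -!(scal_RtoC_mult _ (2 ^ k) (t / 2 ^ k)) f_scal_pow2 f_scal_real_small.
Qed.

Lemma f_scal (c : C) (x : A) : f (scal c x) = scal c (f x).
Proof.
  case: (Req_dec (Cmod c) 0) => [/Cmod_eq_0 -> | Hc].
  { by rewrite !scal_zero_l f_zero. }
  have Hm : 0 < Cmod c by have := Cmod_ge_0 c; lra.
  set u := Cmult c (RtoC (/ Cmod c)).
  have Hu : Cmod u = 1.
  { rewrite /u Cmod_mult Cmod_R Rabs_pos_eq; first by field.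
    apply: Rlt_le. exact: Rinv_0_lt_compat. }
  have -> : c = Cmult (RtoC (Cmod c)) u.
  { rewrite /u. clear Hu u Hm. move: (Cmod c) Hc => m Hm.
    case: c => c1 c2. rewrite /Cmult /RtoC /=. f_equal; field; exact: Hm. }
  by rewrite -!(scal_assoc (RtoC (Cmod c)) u) f_scal_real (f_scal_unit _ _ Hu).
Qed.

Lemma f_jordan (a : A) : f (apow A mul a n) = jordan_sum A mul n (f a) a.
Proof.
  apply: (eq_of_dilation_bound _ _ _ (theta * rpow (norm a) (2 * r)) (2 * r)); first lra.
  move=> k. have H2k : 1 <= 2 ^ k by apply: pow_R1_Rle; lra.
  have H2kn : 2 ^ k <= (2 ^ k) ^ n by rewrite -{1}(pow_1 (2 ^ k)); apply: Rle_pow.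
  have := jordan_defect_le (scal (RtoC (2 ^ k)) a).
  rewrite apow_scal // !f_scal jordan_sum_scal_both // -scal_minus_distr_l rpow_norm_scal;
    last lra.
  rewrite norm_scal_RtoC; last by apply: pow_le; lra.
  move=> H. apply: Rle_trans (Rmult_le_compat_r _ _ _ (norm_ge_0 _) H2kn) _.
  apply: (Rle_trans _ _ _ H). right. ring.
Qed.

Lemma f_star (w : A) : f (star w) = star (f w).
Proof.
  apply: (eq_of_dilation_bound _ _ _ (theta * rpow (norm w) r) r); first lra.
  move=> k. have H2k : 0 < 2 ^ k by apply: pow_lt; lra.
  have := star_defect_le (scal (RtoC (2 ^ k)) w).
  rewrite (star_scal_RtoC A star star_scal) !f_scal_real (star_scal_RtoC A star star_scal)
    -scal_minus_distr_l rpow_norm_scal // norm_scal_RtoC; last lra.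
  move=> H. apply: (Rle_trans _ _ _ H). right. ring.
Qed.

Lemma f_star_n_jordan_derivation : star_n_jordan_derivation A mul star n f.
Proof.
  split; [split; [|split] |];
    [exact: f_additive | exact: f_scal | exact: f_jordan | exact: f_star].
Qed.

End ApproximateJordanDerivation.

Theorem corollary2p8 (n : nat) (A : CompleteNormedModule C_AbsRing)
  (mul : A -> A -> A) (star : A -> A) (r theta : R) (f : A -> A) :
  (2 <= n)%nat ->
  cstar_algebra A mul star ->
  0 < r -> r < /2 -> 0 <= theta ->
  (forall (mu : C) (x y a w : A), Cmod mu = 1 ->
     norm (plus (plus
       (minus (plus (scal mu (f (scal (RtoC (/2)) (plus x y))))
                    (scal mu (f (scal (RtoC (/2)) (minus x y)))))
              (f (scal mu x)))
       (minus (f (apow A mul a n)) (jordan_sum A mul n (f a) a)))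
       (minus (f (star w)) (star (f w))))
     <= theta * (rpow (norm x) r * rpow (norm y) r + rpow (norm a) (2 * r)
                 + rpow (norm w) r)) ->
  exists D : A -> A,
    star_n_jordan_derivation A mul star n D /\
    (forall x, norm (minus (f x) (D x))
               <= Rpower 3 r * theta / (2 - Rpower 2 r) * rpow (norm x) (2 * r)) /\
    (forall D' : A -> A,
       star_n_jordan_derivation A mul star n D' ->
       (forall x, norm (minus (f x) (D' x))
                  <= Rpower 3 r * theta / (2 - Rpower 2 r) * rpow (norm x) (2 * r)) ->
       forall x, D' x = D x).
Proof.
  move=> Hn cs _ Hr Htheta Hf.
  set K := Rpower 3 r * theta / (2 - Rpower 2 r).
  have HK : 0 <= K.
  { have H2r : Rpower 2 r < 2 by rewrite -{2}(Rpower_1 2); [apply: Rpower_lt|]; lra.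
    have H3r : 0 < Rpower 3 r by apply: exp_pos.
    apply: Rmult_le_pos; first by apply: Rmult_le_pos; lra.
    apply: Rlt_le. apply: Rinv_0_lt_compat. lra. }
  exists f. split; [|split].
  - apply: (f_star_n_jordan_derivation _ _ _ _ _ _ _ cs _ Hr Hf). lia.
  - move=> x. rewrite minus_eq_zero norm_zero. exact: Rmult_le_pos HK (rpow_ge0 _ _).
  - move=> D' [[_ [HD' _]] _] Hdist x. symmetry.
    apply: (homogeneous_eq_of_dist_le _ _ f D' K (2 * r)) => [|t y|t y|//].
    + lra.
    + exact: (f_scal _ _ _ _ _ _ _ cs Hr Hf).
    + exact: HD'.
Qed.
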